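(* Let $d$ be a positive integer and let $\mu$ be a balanced isotropic Borel probability measure on $\mathbb{S}^{d-1}$. If $\langle x,y\rangle\ge-\frac1d$ for all $x,y$ in the support of $\mu$, then $\mu$ is the uniform distribution over the vertices of a regular simplex, i.e. $\mu=\frac{1}{d+1}\sum_{j=1}^{d+1}\delta_{v_j}$ for some unit vectors $v_1,\dots,v_{d+1}\in\mathbb{S}^{d-1}$ with $\langle v_i,v_j\rangle=-\frac1d$ for all $i\ne j$.
   Context: A Borel probability measure $\mu$ on $\mathbb{S}^{d-1}$ is isotropic if $\int\langle x,y\rangle^2\,d\mu(x)=\frac1d$ for every $y\in\mathbb{S}^{d-1}$, and balanced if $\int x\,d\mu(x)=0$. *)

From HB Require Import structures.
From mathcomp Require Import all_boot all_order all_algebra.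
From mathcomp Require Import all_classical all_reals all_analysis.
Set Implicit Arguments. Unset Strict Implicit. Unset Printing Implicit Defensive.
Import Order.TTheory GRing.Theory Num.Theory.
Import numFieldNormedType.Exports.
Local Open Scope ring_scope.
Local Open Scope classical_set_scope.

Definition borelRd (R : realType) (d : nat) :=
  g_sigma_algebraType (fun U : set 'rV[R]_d => open U).
Arguments borelRd : clear implicits.

Definition dotv (R : realType) (d : nat) (x y : 'rV[R]_d) : R :=
  \sum_(i < d) x 0 i * y 0 i.

Definition sphere (R : realType) (d : nat) : set (borelRd R d) :=
  [set x | dotv (x : 'rV[R]_d) x = 1].
Arguments sphere : clear implicits.

Definition msupport (R : realType) (d : nat)
  (mu : set (borelRd R d) -> \bar R) : set 'rV[R]_d :=
  [set x | forall U : set 'rV[R]_d, open U -> U x -> (0 < mu U)%E].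

(* mu is a Borel probability measure on S^{d-1}, i.e. concentrated on it *)
Definition on_sphere (R : realType) (d : nat) (mu : probability (borelRd R d) R) :=
  mu (sphere R d) = 1%E.

Definition isotropic (R : realType) (d : nat) (mu : probability (borelRd R d) R) :=
  forall y : 'rV[R]_d, dotv y y = 1 ->
    (\int[mu]_(x in sphere R d) ((dotv (x : 'rV[R]_d) y) ^+ 2)%:E = (d%:R^-1)%:E)%E.

Definition balanced (R : realType) (d : nat) (mu : probability (borelRd R d) R) :=
  forall i : 'I_d, (\int[mu]_(x in sphere R d) ((x : 'rV[R]_d) 0 i)%:E = 0)%E.

From HB Require Import structures.
From mathcomp Require Import all_boot all_order all_algebra.
From mathcomp Require Import all_classical all_reals all_analysis.
From mathcomp Require Import measurable_realfun ring lra.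
Set Implicit Arguments. Unset Strict Implicit. Unset Printing Implicit Defensive.
Import Order.TTheory GRing.Theory Num.Theory.
Import numFieldNormedType.Exports.
Local Open Scope ring_scope.
Local Open Scope classical_set_scope.

(* Let q(t) = (t + 1/d)(1 - t).  For a unit vector x, balance and isotropy give
   \int q(<z, x>) dmu(z) = 1/d + 0 - 1/d = 0, whereas q(<z, x>) >= 0 on the
   support since -1/d <= <z, x> <= 1.  By continuity q(<y, x>) = 0 for all x, y
   in the support: two distinct support points have inner product -1/d.  Such a
   family has at most d + 1 members, because |w_1 + ... + w_k|^2 =
   k (1 + 1/d - k/d) >= 0, so mu consists of finitely many atoms m_j at points
   w_j.  Integrating <z, w_j> gives (1 + 1/d) m_j = 1/d, i.e. m_j = 1/(d + 1),
   and the masses sum to 1, so there are exactly d + 1 atoms. *)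

Lemma exists_injective_enum (T : Type) (P : set T) (n : nat) :
  (forall k (w : 'I_k -> T), injective w -> (forall j, P (w j)) -> (k <= n)%N) ->
  exists k (w : 'I_k -> T), injective w /\ range w = P.
Proof.
move=> card_le.
pose fam k := `[< exists w : 'I_k -> T, injective w /\ forall j, P (w j) >].
have fam0 : exists k, fam k.
  exists 0%N; apply/asboolP.
  by exists (fun i : 'I_0 => False_rect T (notF (ltn_ord i))); split => [[]|[]].
have fam_le k : fam k -> (k <= n)%N by move=> /asboolP[w [/card_le]].
have [k /asboolP[w [w_inj wP]] k_max] := ex_maxnP fam0 fam_le.
exists k, w; split => //; apply/seteqP; split=> [_ [j _ <-] //|z Pz].
apply: contrapT => z_new.
suff /k_max : fam k.+1 by rewrite ltnn.
pose w' (j : 'I_k.+1) := if unlift ord_max j is Some j' then w j' else z.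
apply/asboolP; exists w'; split; last by move=> j; rewrite /w'; case: unliftP.
move=> i1 i2; rewrite /w'.
case: unliftP => [j1 ->|->]; case: unliftP => [j2 ->|->] //.
- by move=> /w_inj ->.
- by move=> wz; case: z_new; exists j1.
- by move=> zw; case: z_new; exists j2.
Qed.

Section InnerProduct.
Variables (R : realType) (d : nat).
Local Notation V := 'rV[R]_d.
Implicit Types x y z : V.

Lemma dotvC x y : dotv x y = dotv y x.
Proof. by apply: eq_bigr => i _; rewrite mulrC. Qed.

Lemma dotvDl x y z : dotv (x + y) z = dotv x z + dotv y z.
Proof. by rewrite /dotv -big_split; apply: eq_bigr => i _; rewrite !mxE mulrDl. Qed.

Lemma dotvNl x z : dotv (- x) z = - dotv x z.
Proof. by rewrite /dotv -sumrN; apply: eq_bigr => i _; rewrite !mxE mulNr. Qed.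

Lemma dotv0l z : dotv 0 z = 0.
Proof. by rewrite /dotv big1 // => i _; rewrite mxE mul0r. Qed.

Lemma dotvDr x y z : dotv z (x + y) = dotv z x + dotv z y.
Proof. by rewrite dotvC dotvDl !(dotvC z). Qed.

Lemma dotvNr x z : dotv z (- x) = - dotv z x.
Proof. by rewrite dotvC dotvNl dotvC. Qed.

Lemma dotv_suml k (w : 'I_k -> V) y :
  dotv (\sum_(j < k) w j) y = \sum_(j < k) dotv (w j) y.
Proof. by elim/big_rec2: _ => [|j a b _ <-]; rewrite ?dotv0l ?dotvDl. Qed.

Lemma dotv_sumr k (w : 'I_k -> V) y :
  dotv y (\sum_(j < k) w j) = \sum_(j < k) dotv y (w j).
Proof. by rewrite dotvC dotv_suml; apply: eq_bigr => j _; rewrite dotvC. Qed.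

Lemma dotvv_ge0 x : 0 <= dotv x x.
Proof. by apply: sumr_ge0 => i _; rewrite -expr2 sqr_ge0. Qed.

Lemma dotvv_eq0 x : dotv x x = 0 -> x = 0.
Proof.
move=> /eqP; rewrite psumr_eq0 => [/allP x0|i _]; last by rewrite -expr2 sqr_ge0.
apply/rowP => i; rewrite mxE.
by have := x0 i (mem_index_enum _); rewrite /= mulf_eq0 orbb => /eqP.
Qed.

Lemma dotvBB x y : dotv (x - y) (x - y) = dotv x x - 2 * dotv x y + dotv y y.
Proof. by rewrite dotvDl !dotvDr !dotvNl !dotvNr opprK (dotvC y x); ring. Qed.

Lemma unit_dotv_le1 x y : dotv x x = 1 -> dotv y y = 1 -> dotv x y <= 1.
Proof. by move=> x1 y1; have := dotvv_ge0 (x - y); rewrite dotvBB x1 y1; lra. Qed.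

Lemma unit_dotv_norm_le1 x y : dotv x x = 1 -> dotv y y = 1 -> `|dotv x y| <= 1.
Proof.
move=> x1 y1; rewrite ler_norml unit_dotv_le1 // andbT lerNl -dotvNr.
by apply: unit_dotv_le1; rewrite // dotvNl dotvNr opprK.
Qed.

Lemma unit_dotv_eq1 x y : dotv x x = 1 -> dotv y y = 1 -> dotv x y = 1 -> x = y.
Proof.
move=> x1 y1 xy1; apply/eqP; rewrite -subr_eq0; apply/eqP/dotvv_eq0.
by rewrite dotvBB x1 y1 xy1; ring.
Qed.

Lemma unit_coord_le1 x i : dotv x x = 1 -> `|x 0 i| <= 1.
Proof.
move=> x1; have : x 0 i * x 0 i <= 1.
  rewrite -x1 /dotv (bigD1 i) //= lerDl.
  by apply: sumr_ge0 => j _; rewrite -expr2 sqr_ge0.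
by rewrite ler_norml; move=> ?; apply/andP; split; nra.
Qed.

Section Simplex.
Variables (k : nat) (w : 'I_k -> V).
Hypotheses (w_unit : forall j, dotv (w j) (w j) = 1)
  (w_obtuse : forall i j, i != j -> dotv (w i) (w j) = - d%:R^-1).

Lemma simplex_dotvE i j :
  dotv (w i) (w j) = (1 + d%:R^-1) * (i == j)%:R - d%:R^-1.
Proof.
by case: eqVneq => [->|/w_obtuse ->]; rewrite ?mulr1 ?w_unit ?addrK // mulr0 sub0r.
Qed.

Lemma simplex_card_le : (0 < d)%N -> (k <= d.+1)%N.
Proof.
move=> d_gt0; set u := d%:R^-1 : R.
have row_sum j : \sum_(l < k) dotv (w j) (w l) = 1 + u - k%:R * u.
  rewrite (eq_bigr _ (fun l _ => simplex_dotvE j l)) sumrB -mulr_sumr.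
  rewrite (bigD1 j) //= eqxx big1 ?addr0 ?mulr1 => [|l /negbTE]; last first.
    by rewrite eq_sym => ->.
  by rewrite sumr_const card_ord mulr_natl.
have := dotvv_ge0 (\sum_(j < k) w j).
rewrite dotv_suml (eq_bigr _ (fun j _ => etrans (dotv_sumr w (w j)) (row_sum j))).
rewrite sumr_const card_ord.
case: (posnP k) => [-> //|k_gt0].
rewrite pmulrn_lge0 // => sum_ge0.
have du : d%:R * u = 1 by rewrite mulfV // pnatr_eq0 -lt0n.
have : 0 <= d%:R * (1 + u - k%:R * u) by rewrite mulr_ge0.
rewrite mulrBr mulrDr mulr1 du mulrCA du mulr1 subr_ge0.
by rewrite -(ler_nat R) -natr1.
Qed.

End Simplex.
End InnerProduct.

Lemma continuous_sumr (U : topologicalType) (R : realType) (I : Type)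
    (s : seq I) (f : I -> U -> R) :
  (forall i, continuous (f i)) -> continuous (fun z => \sum_(i <- s) f i z).
Proof.
move=> cf; elim: s => [|a s IH].
  by under eq_fun do rewrite big_nil; exact: cst_continuous.
under eq_fun do rewrite big_cons.
by move=> z; apply: continuousD; [exact: cf | exact: IH].
Qed.

Section BorelRd.
Variables (R : realType) (d : nat).
Local Notation V := 'rV[R]_d.
Local Notation T := (borelRd R d).

Lemma open_measurable_borelRd (U : set V) : open U -> measurable (U : set T).
Proof. exact: sub_sigma_algebra. Qed.

Lemma measurable_set1_borelRd (a : V) : measurable ([set a] : set T).
Proof.
rewrite -[[set a]]setCK; apply: measurableC; apply: open_measurable_borelRd.
apply/closed_openC/accessible_closed_set1.
exact/hausdorff_accessible/norm_hausdorff.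
Qed.

Lemma continuous_measurable_borelRd (f : V -> R) :
  continuous f -> measurable_fun [set: T] (f : T -> R).
Proof.
move=> cf; apply: (@measurability _ _ T R _ f _ (RGenOpens.measurableE R)).
move=> _ [_ [a [b ->] <-]]; rewrite setTI.
apply: open_measurable_borelRd; apply: (proj1 (continuousP f) cf).
exact: interval_open.
Qed.

Lemma continuous_dotvl (y : V) : continuous (fun z : V => dotv z y).
Proof.
apply: continuous_sumr => i z.
by apply: continuousM; [exact: coord_continuous | exact: cst_continuous].
Qed.

Lemma measurable_sphere : measurable (sphere R d).
Proof.
have cont_dotvv : continuous (fun z : V => dotv z z).
  by apply: continuous_sumr => i z; apply: continuousM; exact: coord_continuous.
have := continuous_measurable_borelRd cont_dotvv measurableT (measurable_set1 1).
by rewrite setTI.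
Qed.

Definition rat_ball (q : 'rV[rat]_d) (n : nat) : set V :=
  ball (map_mx (@ratr R) q : V) n.+1%:R^-1.

Lemma open_rat_ball q n : open (rat_ball q n).
Proof. exact: ball_open. Qed.

Lemma rat_ball_subset (U : set V) (x : V) : open U -> U x ->
  exists q n, rat_ball q n x /\ rat_ball q n `<=` U.
Proof.
move=> oU Ux; have /nbhs_ballP[e e_gt0 eU] := open_nbhs_nbhs (conj oU Ux).
have [n ne] : exists n : nat, n.+1%:R^-1 < e / 2 :> R.
  have [n] := ltr_add_invr (divr_gt0 e_gt0 (ltr0Sn R 1)).
  by rewrite add0r; exists n.
have /choice[qf qfP] (i : 'I_d) : exists r : rat,
    ratr r \in `](x 0 i - n.+1%:R^-1), (x 0 i + n.+1%:R^-1)[%R.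
  by apply: rat_in_itvoo; rewrite ltrBlDr -addrA ltrDl addr_gt0 // invr_gt0 ltr0Sn.
have qx : rat_ball (\row_i qf i) n x.
  split=> [|i j]; first by rewrite invr_gt0.
  rewrite (ord1 i) !mxE; have := qfP j; rewrite in_itv /=.
  by rewrite /ball /= distrC ltr_distlC.
exists (\row_i qf i), n; split=> // z [_ qz]; apply: eU; split=> // i j.
rewrite /ball /=.
rewrite (le_lt_trans (ler_distD ((map_mx (@ratr R) (\row_i qf i) : V) i j) _ _)) //.
have := qz i j; have := qx.2 i j; rewrite /ball /= => qx_ij qz_ij.
by rewrite (splitr e) ltrD // (lt_trans _ ne) // distrC.
Qed.

Section Support.
Variable mu : {measure set T -> \bar R}.

Lemma msupportNP x :
  ~ msupport mu x -> exists U : set V, [/\ open U, U x & mu U = 0%E].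
Proof.
move=> /existsNP[U /not_implyP[oU /not_implyP[Ux /negP]]].
by rewrite -leNgt measure_le0 => /eqP U0; exists U.
Qed.

Lemma open_msupportC : open (~` msupport mu).
Proof.
set S := ~` _; rewrite openE => x /msupportNP[U [oU Ux U0]].
apply: filterS (open_nbhs_nbhs (conj oU Ux)) => z Uz Sz.
by have := Sz U oU Uz; rewrite U0 ltxx.
Qed.

Lemma measurable_msupport : measurable (msupport mu : set T).
Proof.
rewrite -[msupport mu]setCK; apply: measurableC.
apply: open_measurable_borelRd; exact: open_msupportC.
Qed.

Lemma msupportC_null : mu (~` msupport mu) = 0%E.
Proof.
(* The complement of the support is covered by the countably many null balls
   with rational centre and radius 1/(n+1). *)
pose G n : set T := if unpickle n is Some (q, m) then
  (if pselect (mu (rat_ball q m) = 0%E) is left _ then rat_ball q m else set0) else set0.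
have G_null n : mu.-negligible (G n).
  rewrite /G; case: unpickle => [[q m]|]; last exact: negligible_set0.
  case: pselect => [U0|_]; last exact: negligible_set0.
  by apply/negligibleP => //; apply: open_measurable_borelRd; exact: open_rat_ball.
have mSC : measurable (~` msupport mu : set T).
  by apply: measurableC; exact: measurable_msupport.
apply/(negligibleP _ mSC).
apply: negligibleS (negligible_bigcup G_null).
move=> x /msupportNP[U [oU Ux U0]].
have [q [n [qx qU]]] := rat_ball_subset oU Ux.
exists (pickle (q, n)) => //; rewrite /G pickleK.
case: pselect => // -[]; apply/eqP; rewrite -measure_le0 -U0 le_measure ?inE //.
- apply: open_measurable_borelRd; exact: open_rat_ball.
- exact: open_measurable_borelRd.
Qed.

Lemma measure_setI_conull (A D : set T) : measurable A -> measurable D ->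
  mu (~` D) = 0%E -> mu (A `&` D) = mu A.
Proof.
move=> mA mD D0; rewrite [RHS](measureDI _ mA mD).
rewrite (@subset_measure0 _ _ _ _ (A `\` D) (~` D)) ?add0e //.
- exact: measurableD.
- exact: measurableC.
Qed.

End Support.
End BorelRd.
Arguments measurable_sphere {R d}.

Section IntegralOnSupport.
Variables (R : realType) (d : nat).
Local Notation V := 'rV[R]_d.
Local Notation T := (borelRd R d).

Lemma integrable_continuous_bounded (mu : {finite_measure set T -> \bar R})
    (D : set T) (f : V -> R) (B : R) : measurable D -> continuous f ->
  (forall z, D z -> `|f z| <= B) -> mu.-integrable D (EFin \o (f : T -> R)).
Proof.
move=> mD cf f_le; apply: measurable_bounded_integrable => //.
- by rewrite ltey_eq fin_num_measure.
- exact: measurable_funS (continuous_measurable_borelRd cf).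
- exists B; split; first exact: num_real.
  by move=> M BM z Dz; exact: le_trans (f_le z Dz) (ltW BM).
Qed.

Variables (mu : {measure set T -> \bar R}) (D : set T).
Hypotheses (mD : measurable D) (D_conull : mu (~` D) = 0%E).
Local Notation S := (msupport mu).

Lemma measurable_setI_msupport : measurable (D `&` S).
Proof. by apply: measurableI => //; exact: measurable_msupport. Qed.

Lemma setI_msupport_conull : mu (~` (D `&` S)) = 0%E.
Proof.
rewrite setCI null_set_setU //; [exact: measurableC | | exact: msupportC_null].
by apply: measurableC; exact: measurable_msupport.
Qed.

Lemma integral_setI_msupport (f : T -> \bar R) : mu.-integrable D f ->
  (\int[mu]_(z in D) f z = \int[mu]_(z in D `&` S) f z)%E.
Proof.
move=> intf; rewrite (negligible_integral _ mD intf (msupportC_null mu)).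
  by rewrite setDE setCK.
by apply: measurableC; exact: measurable_msupport.
Qed.

Lemma msupport_le0_of_integral0 (f : V -> R) : continuous f ->
  mu.-integrable D (EFin \o f) ->
  (forall z, D z -> S z -> 0 <= f z) ->
  (\int[mu]_(z in D) (f z)%:E = 0)%E -> forall y, S y -> f y <= 0.
Proof.
move=> cf intf f_ge0 int0 y Sy; rewrite leNgt; apply/negP => fy_gt0.
(* [f > f y / 2] on an open neighbourhood [U] of [y], and [mu U > 0]. *)
pose c := f y / 2.
pose U := f @^-1` `]c, +oo[.
have oU : open U by apply: (proj1 (continuousP f) cf); exact: interval_open.
have mU : measurable (U : set T) := open_measurable_borelRd oU.
have Uy : U y by rewrite /U /= in_itv /= andbT ltr_pdivrMr // ltr_pMr // ltr1n.
have mDS := measurable_setI_msupport.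
have mf : measurable_fun (D `&` S) (EFin \o f).
  exact: measurable_funS (measurable_int _ intf).
have : (c%:E * mu U <= 0)%E.
  rewrite -int0 integral_setI_msupport //.
  rewrite -(measure_setI_conull mU mDS setI_msupport_conull).
  rewrite -integral_cst; last exact: measurableI.
  apply: (@le_trans _ _ (\int[mu]_(z in U `&` (D `&` S)) (f z)%:E)%E).
    apply: ge0_le_integral => //; first exact: measurableI.
    - by move=> z _; rewrite lee_fin ltW // divr_gt0.
    - by apply: measurable_funS mf => //; exact: subIsetr.
    - by move=> z [Uz _]; rewrite lee_fin; move: Uz; rewrite /U /= in_itv /= andbT => /ltW.
  apply: ge0_subset_integral => //; first exact: measurableI.
  by move=> z [Dz Sz]; rewrite lee_fin; exact: f_ge0.
by apply/negP; rewrite -ltNge mule_gt0 // ?lte_fin ?divr_gt0 //; exact: Sy.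
Qed.

Lemma integral_finite_msupport k (w : 'I_k -> V) (f : T -> R) :
  injective w -> D `&` S = range w -> mu.-integrable D (EFin \o f) ->
  (\int[mu]_(z in D) (f z)%:E =
   \sum_(j < k) (f (w j))%:E * mu ([set w j] : set T))%E.
Proof.
move=> w_inj DS_w intf.
have DS_big : D `&` S = \big[setU/set0]_(j <- index_enum 'I_k) ([set w j] : set T).
  rewrite -bigcup_seq DS_w; apply/seteqP; split=> [_ [j _ <-]|_ [j _ ->]] //.
  by exists j => //=; rewrite mem_index_enum.
rewrite integral_setI_msupport // DS_big integral_bigsetU_EFin //.
- apply: eq_bigr => j _.
  rewrite (eq_integral (fun _ => (f (w j))%:E)); last by move=> z; rewrite inE => ->.
  by rewrite integral_cst //; exact: measurable_set1_borelRd.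
- by move=> j; exact: measurable_set1_borelRd.
- exact: index_enum_uniq.
- by move=> i j _ _ [z [/= -> /w_inj]].
- apply: measurable_funS (measurable_int _ intf) => //.
  by rewrite -DS_big; exact: subIsetl.
Qed.

End IntegralOnSupport.

Definition simplex_quad (R : realType) (d : nat) (t : R) : R :=
  (t + d%:R^-1) * (1 - t).

Lemma continuous_simplex_quad (R : realType) (d : nat) :
  continuous (@simplex_quad R d).
Proof.
move=> t; apply: cvgM; [apply: cvgD | apply: cvgB];
  by [exact: cvg_id | exact: cvg_cst].
Qed.

Lemma simplex_quad_norm_le (R : realType) (d : nat) (t : R) :
  `|t| <= 1 -> `|simplex_quad d t| <= 2 * (1 + d%:R^-1).
Proof.
have u_ge0 : 0 <= d%:R^-1 :> R by rewrite invr_ge0.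
rewrite /simplex_quad !ler_norml => /andP[t_ge t_le]; apply/andP; split; nra.
Qed.

Section BalancedIsotropic.
Variables (R : realType) (d : nat) (mu : probability (borelRd R d) R).
Hypotheses (mu_sphere : on_sphere mu) (mu_bal : balanced mu) (mu_iso : isotropic mu).
Local Notation V := 'rV[R]_d.
Local Notation T := (borelRd R d).
Local Notation D := (sphere R d).
Local Notation S := (msupport mu).
Local Notation u := (d%:R^-1 : R).

Lemma measure_sphere : (mu : {measure set T -> \bar R}) D = 1%E.
Proof. exact: mu_sphere. Qed.

Lemma sphereC_null : mu (~` D) = 0%E.
Proof.
by rewrite probability_setC ?measure_sphere ?subee //; exact: measurable_sphere.
Qed.

Lemma integrable_dotv (x : V) : dotv x x = 1 ->
  mu.-integrable D (EFin \o (fun z : T => dotv (z : V) x)).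
Proof.
move=> x1; apply: (integrable_continuous_bounded (B := 1) mu measurable_sphere).
  exact: continuous_dotvl.
by move=> z Dz; exact: unit_dotv_norm_le1 Dz x1.
Qed.

Lemma integral_dotv_eq0 (y : V) : (\int[mu]_(z in D) (dotv (z : V) y)%:E = 0)%E.
Proof.
have mD := @measurable_sphere R d.
have int_coordZ (i : 'I_d) (a : R) :
    mu.-integrable D (EFin \o (fun z : T => (z : V) 0 i * a)).
  apply: (integrable_continuous_bounded (B := `|a|) mu mD).
    by move=> z; apply: continuousM; [exact: coord_continuous | exact: cst_continuous].
  by move=> z Dz; rewrite normrM ler_piMl // unit_coord_le1.
under eq_integral do rewrite /dotv -sumEFin.
rewrite integral_sum //; last by move=> i; exact: int_coordZ.
rewrite big1 // => i _; under eq_integral do rewrite EFinM.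
rewrite integralZr ?mu_bal ?mul0e //.
apply: eq_integrable mD _ _ _ (int_coordZ i 1) => z _.
by rewrite /= mulr1.
Qed.

Lemma integral_simplex_quad (x : V) : dotv x x = 1 ->
  (\int[mu]_(z in D) (simplex_quad d (dotv (z : V) x))%:E = 0)%E.
Proof.
move=> x1; have mD := @measurable_sphere R d.
have int_t := integrable_dotv x1.
have int_t2 : mu.-integrable D (EFin \o (fun z : T => dotv (z : V) x ^+ 2)).
  apply: (integrable_continuous_bounded (B := 1) mu mD).
    move=> z; apply: (@continuousM R V (fun z => dotv z x) (fun z => dotv z x));
    exact: continuous_dotvl.
  by move=> z Dz; rewrite normrX expr_le1 ?unit_dotv_norm_le1.
have int_u : mu.-integrable D (EFin \o cst u) by exact: finite_measure_integrable_cst.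
transitivity (\int[mu]_(z in D) (u%:E + ((1 - u)%:E * (dotv (z : V) x)%:E
    + (-1)%:E * (dotv (z : V) x ^+ 2)%:E)))%E.
  by apply: eq_integral => z _; rewrite -!EFinM -!EFinD /simplex_quad; congr (_%:E); ring.
have int_1 : mu.-integrable D (fun z : T => (1 - u)%:E * (dotv (z : V) x)%:E)%E.
  exact: integrableZl.
have int_2 : mu.-integrable D (fun z : T => (-1)%:E * (dotv (z : V) x ^+ 2)%:E)%E.
  exact: integrableZl.
rewrite integralD //; last exact: integrableD.
rewrite integralD //.
rewrite integralZl // integralZl // integral_dotv_eq0 mu_iso // integral_cst //.
by rewrite measure_sphere mule0 mule1 add0e -EFinM -EFinD; congr (_%:E); ring.
Qed.

Hypothesis mu_obtuse : forall x y : V, S x -> S y -> - u <= dotv x y.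

Lemma msupport_simplex (x y : V) : D x -> S x -> D y -> S y ->
  x = y \/ dotv x y = - u.
Proof.
move=> Dx Sx Dy Sy.
pose f := simplex_quad d \o (fun z : V => dotv z x).
have f_ge0 z : D z -> S z -> 0 <= f z.
  move=> Dz Sz; apply: mulr_ge0; first by rewrite -lerBlDr sub0r mu_obtuse.
  by rewrite subr_ge0 unit_dotv_le1.
have cf : continuous f.
  move=> z; apply: continuous_comp; first exact: continuous_dotvl.
  exact: continuous_simplex_quad.
have int_f : mu.-integrable D (EFin \o f).
  apply: (integrable_continuous_bounded (B := 2 * (1 + u)) mu measurable_sphere cf).
  by move=> z Dz; apply: simplex_quad_norm_le; exact: unit_dotv_norm_le1 Dz Dx.
have fy0 : f y = 0.
  apply/eqP; rewrite eq_le f_ge0 // andbT.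
  apply: (msupport_le0_of_integral0 measurable_sphere sphereC_null cf int_f f_ge0) => //.
  exact: integral_simplex_quad.
move/eqP: fy0; rewrite mulf_eq0 => /orP[|]; rewrite dotvC.
  by rewrite addr_eq0 => /eqP; right.
by rewrite subr_eq0 eq_sym => /eqP xy1; left; exact: unit_dotv_eq1.
Qed.

Hypothesis d_gt0 : (0 < d)%N.

Lemma exists_msupport_enum :
  exists k (w : 'I_k -> V), injective w /\ range w = D `&` S.
Proof.
apply: (@exists_injective_enum _ _ d.+1) => k w w_inj wP.
apply: (simplex_card_le (w := w)) => // [j|i j ij]; first by case: (wP j).
have [Dwi Swi] := wP i; have [Dwj Swj] := wP j.
by case: (msupport_simplex Dwi Swi Dwj Swj) => // /w_inj /eqP; rewrite (negbTE ij).
Qed.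

Section Atoms.
Variables (k : nat) (w : 'I_k -> V).
Hypotheses (w_inj : injective w) (w_range : range w = D `&` S).

Let w_mem j : (D `&` S) (w j). Proof. by rewrite -w_range; exists j. Qed.

Lemma atoms_dotvE i j : dotv (w i) (w j) = (1 + u) * (i == j)%:R - u.
Proof.
apply: simplex_dotvE => [l|l l' ll']; first by case: (w_mem l).
have [Dl Sl] := w_mem l; have [Dl' Sl'] := w_mem l'.
by case: (msupport_simplex Dl Sl Dl' Sl') => // /w_inj /eqP; rewrite (negbTE ll').
Qed.

Let m j := fine (mu ([set w j] : set T)).

Lemma atomE j : (mu : {measure set T -> \bar R}) [set w j] = (m j)%:E.
Proof.
rewrite fineK // ge0_fin_numE ?measure_ge0 //.
by rewrite (le_lt_trans (probability_le1 mu (measurable_set1_borelRd _))) ?ltry.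
Qed.

Lemma integral_atoms (f : T -> R) : mu.-integrable D (EFin \o f) ->
  (\int[mu]_(z in D) (f z)%:E = (\sum_(j < k) f (w j) * m j)%:E)%E.
Proof.
move=> intf; rewrite (integral_finite_msupport measurable_sphere w_inj) //.
by rewrite -sumEFin; apply: eq_bigr => j _; rewrite atomE.
Qed.

Lemma sum_atoms : \sum_(j < k) m j = 1.
Proof.
have := integral_atoms (finite_measure_integrable_cst mu 1 measurable_sphere).
rewrite /= integral_cst ?measure_sphere ?mul1e; last exact: measurable_sphere.
by under eq_bigr do rewrite mul1r; case.
Qed.

Lemma atom_mass j : m j = d.+1%:R^-1.
Proof.
have := integral_atoms (integrable_dotv (w_mem j).1).
rewrite integral_dotv_eq0 => -[].
rewrite (eq_bigr (fun l => (1 + u) * ((l == j)%:R * m l) - u * m l)); last first.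
  by move=> l _; rewrite atoms_dotvE; ring.
rewrite sumrB -!mulr_sumr sum_atoms (bigD1 j) //= eqxx mul1r big1 ?addr0; last first.
  by move=> l /negbTE ->; rewrite mul0r.
move/eqP; rewrite mulr1 eq_sym subr_eq0 => /eqP mj.
have d_neq0 : d%:R != 0 :> R by rewrite pnatr_eq0 -lt0n.
have u1_neq0 : 1 + u != 0 by rewrite gt_eqF // ltr_pwDl ?invr_ge0.
rewrite -[m j](mulKf u1_neq0) mj -natr1; field.
by rewrite d_neq0 natr1 pnatr_eq0.
Qed.

Lemma atoms_card : k = d.+1.
Proof.
have := sum_atoms; under eq_bigr do rewrite atom_mass.
rewrite sumr_const card_ord => /(congr1 (fun t => t * d.+1%:R)).
rewrite mulrnAl mulVf ?pnatr_eq0 // mul1r => /eqP.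
by rewrite eqr_nat => /eqP.
Qed.

Lemma measure_atoms (A : set T) : measurable A ->
  mu A = (\sum_(j < k) d.+1%:R^-1%:E * \d_(w j : T) A)%E.
Proof.
move=> mA; have mD := @measurable_sphere R d.
have int_A : mu.-integrable D (EFin \o (\1_A : T -> R)).
  exact: integrableS (integrable_indic mu mA).
have := integral_atoms int_A.
rewrite integral_indic // (measure_setI_conull mA mD sphereC_null) => ->.
rewrite -sumEFin; apply: eq_bigr => j _.
by rewrite atom_mass diracE indicE mulrC.
Qed.
End Atoms.
End BalancedIsotropic.

Theorem theorem5p5 (R : realType) (d : nat) (d_gt0 : (0 < d)%N)
  (mu : probability (borelRd R d) R) :
  on_sphere mu -> balanced mu -> isotropic mu ->
  (forall x y : 'rV[R]_d, msupport mu x -> msupport mu y ->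
     - d%:R^-1 <= dotv x y) ->
  exists v : 'I_d.+1 -> 'rV[R]_d,
    (forall j, dotv (v j) (v j) = 1) /\
    (forall i j, i != j -> dotv (v i) (v j) = - d%:R^-1) /\
    (forall A : set (borelRd R d), measurable A ->
       mu A = ((d.+1)%:R^-1)%:E * (\sum_(j < d.+1) \d_(v j : borelRd R d) A))%E.
Proof.
move=> mu_sphere mu_bal mu_iso mu_obtuse.
have [k [w [w_inj w_range]]] :=
  exists_msupport_enum mu_sphere mu_bal mu_iso mu_obtuse d_gt0.
have w_dotvE := atoms_dotvE mu_sphere mu_bal mu_iso mu_obtuse w_inj w_range.
have k_eq := atoms_card mu_sphere mu_bal mu_iso mu_obtuse d_gt0 w_inj w_range.
subst k; exists w; split; [|split].
- by move=> j; rewrite w_dotvE eqxx mulr1 addrK.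
- by move=> i j ij; rewrite w_dotvE (negbTE ij) mulr0 sub0r.
- move=> A mA; rewrite ge0_sume_distrr => [|j _]; last exact: measure_ge0.
  exact: measure_atoms.
Qed.
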